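(* For every instance such that $K:=\pi_1+\pi_3+\pi_4-1\ge 1$ and $|S_2|\le K$, we have $H^{PW''}\le \tfrac{15}{8}H^*$.
   Context: An instance consists of an integer $n\ge 1$ and growth rates $1=h(1)\ge h(2)\ge\cdots\ge h(n)>0$ of bamboos $b_1,\dots,b_n$. Bamboo Garden Trimming (discrete version): - All heights are $0$ initially. - On each day $t=1,2,\dots$ every bamboo $b_j$ grows by $h(j)$. - At the end of each day the gardener cuts exactly one bamboo $\sigma(t)\in\{1,\dots,n\}$ back to height $0$. The height of a schedule $\sigma:\mathbb{N}\to\{1,\dots,n\}$ is the supremum, over all days $t$ and all $j$, of the height of $b_j$ at the end of day $t$ just before the cut. $H^*$ denotes the infimum of this height over all schedules. Value of algorithm PW'': - Split $\{1,\dots,n\}$ into four sets: - $S_1=\{j: \tfrac23<h(j)\le 1\}$; - $S_2=\{j:\tfrac12<h(j)\le\tfrac23\}$; - $S_3=\{j: h(j)\le\tfrac12 \text{ and } \tfrac23 2^{-k}<h(j)\le 2^{-k}\text{ for some integer }k\ge1\}$; - $S_4=\{j: h(j)\le\tfrac12\text{ and } 2^{-(k+1)}<h(j)\le \tfrac23 2^{-k}\text{ for some integer }k\ge 1\}$. - Modified growths: $h''(j)=2^{-k}$ for $j\in S_3$ and $h''(j)=\tfrac23 2^{-k}$ for $j\in S_4$, with $k$ as in the definition of the set. - Let $\pi_1=|S_1|$, $sh_3=\sum_{j\in S_3}h''(j)$, $sh_4=\sum_{j\in S_4}h''(j)$, $\pi_3=\lfloor sh_3\rfloor$, $\pi_4=\lfloor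 sh_4\rfloor$, $f_3=sh_3-\pi_3$, $f_4=sh_4-\pi_4$. - Option (a): $\pi_R(a)=\lceil f_3+f_4\rceil$ and $z(a)=\pi_1+|S_2|+\pi_3+\pi_4+\pi_R(a)$. - Option (b): if $S_2=\emptyset$ put $z(b)=+\infty$. Otherwise let $h^*=\max_{j\in S_2}h(j)$ and $f_2=\tfrac12$ if $|S_2|$ is odd, $f_2=0$ if $|S_2|$ is even. Then $\pi_R(b)=\lceil f_2+f_3+f_4\rceil$ and $z(b)=2h^*\,(\pi_1+\lfloor |S_2|/2\rfloor+\pi_3+\pi_4+\pi_R(b))$. - The value returned by algorithm PW'' is $H^{PW''}=\min\{z(a),z(b)\}$. The paper takes this as the maximum height of the periodic pinwheel trimming schedule that it builds from these partitions. *)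

From Stdlib Require Import Reals Lra Lia ZArith Arith List.
Open Scope R_scope.

(* Bamboos are indexed 1..n, growth rates h : nat -> R, days t = 1,2,...
   A schedule is sigma : nat -> nat; sigma t is the bamboo cut at the end of day t. *)

Definition valid_schedule (n : nat) (sigma : nat -> nat) : Prop :=
  forall t : nat, (1 <= t)%nat -> (1 <= sigma t <= n)%nat.

(* height of bamboo j at the end of day t, AFTER the cut of day t (t = 0: initial, 0) *)
Fixpoint post_height (h : nat -> R) (sigma : nat -> nat) (j t : nat) : R :=
  match t with
  | O => 0
  | S t' => if Nat.eqb (sigma (S t')) j then 0
            else post_height h sigma j t' + h j
  end.

(* height of bamboo j at the end of day t (t >= 1), just BEFORE the cut *)
Definition pre_height (h : nat -> R) (sigma : nat -> nat) (j t : nat) : R :=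
  post_height h sigma j (t - 1) + h j.

Definition heights (n : nat) (h : nat -> R) (sigma : nat -> nat) (x : R) : Prop :=
  exists t j : nat, (1 <= t)%nat /\ (1 <= j <= n)%nat /\ x = pre_height h sigma j t.

Definition schedule_height (n : nat) (h : nat -> R) (x : R) : Prop :=
  exists sigma : nat -> nat, valid_schedule n sigma /\ is_lub (heights n h sigma) x.

Definition is_glb (E : R -> Prop) (m : R) : Prop :=
  (forall x, E x -> m <= x) /\ (forall b, (forall x, E x -> b <= x) -> b <= m).

Definition instance (n : nat) (h : nat -> R) : Prop :=
  (1 <= n)%nat /\ h 1%nat = 1 /\
  (forall i j : nat, (1 <= i)%nat -> (i <= j)%nat -> (j <= n)%nat -> h j <= h i) /\
  0 < h n.

Definition Rfloor (x : R) : R := IZR (Int_part x).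
Definition Rceil (x : R) : R := - Rfloor (- x).

Definition Rltb (x y : R) : bool := if Rlt_dec x y then true else false.
Definition Rleb (x y : R) : bool := if Rle_dec x y then true else false.

Definition idx (n : nat) : list nat := seq 1 n.

Definition sumR (n : nat) (P : nat -> bool) (f : nat -> R) : R :=
  fold_right Rplus 0 (map f (filter P (idx n))).

Definition card (n : nat) (P : nat -> bool) : nat := length (filter P (idx n)).

Section PW.
Variables (n : nat) (h : nat -> R) (k : nat -> nat).
(* k j is, for h j <= 1/2, the integer k >= 1 with 2^-(k+1) < h j <= 2^-k *)

Definition inS1 (j : nat) : bool := Rltb (2/3) (h j).
Definition inS2 (j : nat) : bool := Rltb (1/2) (h j) && Rleb (h j) (2/3).
Definition inS3 (j : nat) : bool := Rleb (h j) (1/2) && Rltb (2/3 * / 2 ^ k j) (h j).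
Definition inS4 (j : nat) : bool := Rleb (h j) (1/2) && Rleb (h j) (2/3 * / 2 ^ k j).

Definition hpp3 (j : nat) : R := / 2 ^ k j.
Definition hpp4 (j : nat) : R := 2/3 * / 2 ^ k j.

Definition pi1 : R := INR (card n inS1).
Definition s2 : nat := card n inS2.
Definition sh3 : R := sumR n inS3 hpp3.
Definition sh4 : R := sumR n inS4 hpp4.
Definition pi3 : R := Rfloor sh3.
Definition pi4 : R := Rfloor sh4.
Definition f3 : R := sh3 - pi3.
Definition f4 : R := sh4 - pi4.

Definition z_a : R := pi1 + INR s2 + pi3 + pi4 + Rceil (f3 + f4).

Definition hstar : R := fold_right Rmax 0 (map h (filter inS2 (idx n))).
Definition f2 : R := if Nat.odd s2 then 1/2 else 0.
Definition z_b : R :=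
  2 * hstar * (pi1 + INR (Nat.div2 s2) + pi3 + pi4 + Rceil (f2 + f3 + f4)).

(* z(b) = +infinity when S2 is empty, so the minimum is then z(a) *)
Definition H_PW : R := if Nat.eqb s2 0 then z_a else Rmin z_a z_b.

End PW.

(* Every schedule has height at least the total growth rate [sum_j h(j)]: each day the
   bamboos grow by that much in total, while one cut removes at most the height of the
   schedule, so a smaller height would make the total height diverge.  Conversely
   [z(a) < pi1 + |S2| + sh3 + sh4 + 1], and every bamboo of [S1], [S3], [S4] grows at
   least [2/3] of its contribution to this bound ([S2]: at least [1/2]), with [1/3]
   to spare on [b1].  With [|S2| <= K] and [K >= 1] this gives [z(a) <= 15/8 sum_j h(j)]. *)
From Stdlib Require Import Reals Lra Lia List.
Open Scope R_scope.

Definition sumL (l : list nat) (f : nat -> R) : R := fold_right Rplus 0 (map f l).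

Lemma sumL_cons a l f : sumL (a :: l) f = f a + sumL l f.
Proof. reflexivity. Qed.

Lemma sumL_plus l f g : sumL l (fun j => f j + g j) = sumL l f + sumL l g.
Proof. induction l as [|a l IH]; unfold sumL in *; simpl; [ring | rewrite IH; ring]. Qed.

Lemma sumL_le l f g : (forall j, In j l -> f j <= g j) -> sumL l f <= sumL l g.
Proof.
  induction l as [|a l IH]; unfold sumL in *; simpl; intros Hfg; [lra|].
  specialize (IH (fun j Hj => Hfg j (or_intror Hj))).
  specialize (Hfg a (or_introl eq_refl)). lra.
Qed.

Lemma sumL_ext_in l f g : (forall j, In j l -> f j = g j) -> sumL l f = sumL l g.
Proof. intros Hfg. apply Rle_antisym; apply sumL_le; intros j Hj; rewrite Hfg; auto; lra. Qed.

Lemma sumL_const l c : sumL l (fun _ => c) = INR (length l) * c.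
Proof.
  induction l as [|a l IH]; unfold sumL in *; [simpl; ring|].
  cbn [length map fold_right]. rewrite S_INR, IH. ring.
Qed.

Lemma sumL_zero_one l c f : NoDup l -> In c l ->
  sumL l (fun j => if Nat.eqb c j then 0 else f j) = sumL l f - f c.
Proof.
  induction l as [|a l IH]; intros Hnd Hc; [destruct Hc|].
  apply NoDup_cons_iff in Hnd as [Ha Hnd].
  rewrite !sumL_cons.
  destruct (Nat.eqb_spec c a) as [->|Hca].
  - rewrite (sumL_ext_in l _ f); [ring|].
    intros j Hj. destruct (Nat.eqb_spec a j) as [->|]; [contradiction | reflexivity].
  - destruct Hc as [|Hc]; [congruence|]. rewrite IH by assumption. ring.
Qed.

Section TotalHeight.
Variables (n : nat) (h : nat -> R) (sigma : nat -> nat) (x : R).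
Hypothesis h_nonneg : forall j, (1 <= j <= n)%nat -> 0 <= h j.
Hypothesis sigma_valid : valid_schedule n sigma.
Hypothesis pre_height_le : forall t j, (1 <= t)%nat -> (1 <= j <= n)%nat ->
  pre_height h sigma j t <= x.

Definition total_height (t : nat) : R := sumL (idx n) (fun j => post_height h sigma j t).

Lemma total_height_step t : total_height t + sumL (idx n) h - x <= total_height (S t).
Proof.
  unfold total_height.
  set (c := sigma (S t)).
  assert (Hc : (1 <= c <= n)%nat) by (apply sigma_valid; lia).
  assert (Hcut : pre_height h sigma c (S t) <= x) by (apply pre_height_le; lia).
  unfold pre_height in Hcut. replace (S t - 1)%nat with t in Hcut by lia.
  change (fun j => post_height h sigma j (S t))
    with (fun j => if Nat.eqb c j then 0 else post_height h sigma j t + h j).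
  rewrite sumL_zero_one, sumL_plus; [lra | apply seq_NoDup | apply in_seq; lia].
Qed.

Lemma total_height_ge t : INR t * (sumL (idx n) h - x) <= total_height t.
Proof.
  induction t as [|t IH].
  - unfold total_height.
    rewrite (sumL_ext_in _ (fun j => post_height h sigma j 0) (fun _ => 0)), sumL_const
      by reflexivity.
    simpl; lra.
  - pose proof (total_height_step t). rewrite S_INR. lra.
Qed.

Lemma total_height_le t : total_height t <= INR n * x.
Proof.
  unfold total_height, idx. rewrite <- (length_seq n 1) at 2. rewrite <- sumL_const.
  apply sumL_le. intros j Hj. apply in_seq in Hj.
  assert (Hb : pre_height h sigma j (S t) <= x) by (apply pre_height_le; lia).
  unfold pre_height in Hb. replace (S t - 1)%nat with t in Hb by lia.
  pose proof (h_nonneg j ltac:(lia)). lra.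
Qed.

Lemma total_growth_le_height : sumL (idx n) h <= x.
Proof.
  apply Rnot_lt_le. intros Hlt.
  destruct (INR_unbounded (INR n * x / (sumL (idx n) h - x))) as [t Ht].
  pose proof (total_height_ge t). pose proof (total_height_le t).
  apply Rmult_gt_compat_r with (r := sumL (idx n) h - x) in Ht; [|lra].
  unfold Rdiv in Ht. rewrite Rmult_assoc, Rinv_l, Rmult_1_r in Ht; lra.
Qed.

End TotalHeight.

Lemma schedule_height_ge_total_growth n h x :
  (forall j, (1 <= j <= n)%nat -> 0 <= h j) ->
  schedule_height n h x -> sumL (idx n) h <= x.
Proof.
  intros Hh [sigma [Hval [Hub _]]].
  apply (total_growth_le_height n h sigma); [assumption | assumption |].
  intros t j Ht Hj. apply Hub. exists t, j. auto.
Qed.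

Lemma instance_pos n h : instance n h -> forall j, (1 <= j <= n)%nat -> 0 < h j.
Proof.
  intros [_ [_ [Hmono Hn_pos]]] j Hj.
  pose proof (Hmono j n ltac:(lia) ltac:(lia) ltac:(lia)). lra.
Qed.

(* The part of [h j] that pays for bamboo [j] in the bound on [z(a)]. *)
Definition charge (h : nat -> R) (k : nat -> nat) (j : nat) : R :=
  (if inS1 h j then 2/3 else 0) + (if inS2 h j then 1/2 else 0) +
  (if inS3 h k j then 2/3 * hpp3 k j else 0) + (if inS4 h k j then 2/3 * hpp4 k j else 0).

Lemma charge_le (h : nat -> R) (k : nat -> nat) j :
  (h j <= 1/2 -> / 2 ^ S (k j) < h j <= / 2 ^ k j) -> 0 < h j -> charge h k j <= h j.
Proof.
  intros Hk Hpos. unfold charge, inS1, inS2, inS3, inS4, Rltb, Rleb, hpp3, hpp4.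
  assert (Hq : 0 < / 2 ^ k j) by (apply Rinv_0_lt_compat, pow_lt; lra).
  assert (Hhalf : / 2 ^ S (k j) = / 2 ^ k j * / 2) by (simpl; rewrite Rinv_mult; ring).
  rewrite Hhalf in Hk. set (q := / 2 ^ k j) in *.
  destruct (Rle_dec (h j) (1/2)) as [Hle|Hgt].
  - specialize (Hk Hle).
    destruct (Rlt_dec (2/3) (h j)), (Rlt_dec (1/2) (h j)),
      (Rlt_dec (2/3 * q) (h j)), (Rle_dec (h j) (2/3 * q)); simpl; lra.
  - destruct (Rlt_dec (2/3) (h j)), (Rlt_dec (1/2) (h j)), (Rle_dec (h j) (2/3)); simpl; lra.
Qed.

Lemma sumL_charge h k l : sumL l (charge h k) =
  2/3 * INR (length (filter (inS1 h) l)) + 1/2 * INR (length (filter (inS2 h) l)) +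
  2/3 * sumL (filter (inS3 h k) l) (hpp3 k) + 2/3 * sumL (filter (inS4 h k) l) (hpp4 k).
Proof.
  induction l as [|a l IH]; unfold sumL in *; [simpl; ring|].
  cbn [map fold_right filter]. rewrite IH. unfold charge.
  destruct (inS1 h a), (inS2 h a), (inS3 h k a), (inS4 h k a);
    cbn [length map fold_right]; rewrite ?S_INR; ring.
Qed.

Lemma charge_first (h : nat -> R) k : h 1%nat = 1 -> charge h k 1 = 2/3.
Proof.
  intros H1. unfold charge, inS1, inS2, inS3, inS4, Rltb, Rleb. rewrite H1.
  destruct (Rlt_dec (2/3) 1), (Rle_dec 1 (2/3)), (Rle_dec 1 (1/2)); try lra.
  rewrite Bool.andb_false_r. simpl; lra.
Qed.

Lemma total_growth_ge_charges n h k : instance n h ->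
  (forall j, (1 <= j <= n)%nat -> h j <= 1/2 -> / 2 ^ S (k j) < h j <= / 2 ^ k j) ->
  1/3 + (2/3 * pi1 n h + 1/2 * INR (s2 n h) + 2/3 * sh3 n h k + 2/3 * sh4 n h k)
    <= sumL (idx n) h.
Proof.
  intros Hinst Hk.
  pose proof (instance_pos n h Hinst) as Hpos. destruct Hinst as [Hn [H1 _]].
  enough (Hcharge : 1/3 + sumL (idx n) (charge h k) <= sumL (idx n) h)
    by (rewrite sumL_charge in Hcharge; exact Hcharge).
  destruct n as [|m]; [lia|]. unfold idx. simpl seq. unfold sumL; cbn [map fold_right].
  rewrite charge_first, H1 by assumption.
  enough (sumL (seq 2 m) (charge h k) <= sumL (seq 2 m) h) by (unfold sumL in *; lra).
  apply sumL_le. intros j Hj. apply in_seq in Hj.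
  apply charge_le; [apply Hk | apply Hpos]; lia.
Qed.

Lemma Rfloor_le x : Rfloor x <= x.
Proof. apply base_Int_part. Qed.

Lemma Rceil_lt x : Rceil x < x + 1.
Proof. unfold Rceil, Rfloor. pose proof (base_Int_part (- x)). lra. Qed.

Lemma z_a_lt n h k : z_a n h k < pi1 n h + INR (s2 n h) + sh3 n h k + sh4 n h k + 1.
Proof.
  unfold z_a, f3, f4.
  pose proof (Rceil_lt (sh3 n h k - pi3 n h k + (sh4 n h k - pi4 n h k))). lra.
Qed.

Lemma H_PW_le_z_a n h k : H_PW n h k <= z_a n h k.
Proof. unfold H_PW. destruct (Nat.eqb (s2 n h) 0); [lra | apply Rmin_l]. Qed.

Theorem proposition2 (n : nat) (h : nat -> R) (k : nat -> nat) (Hstar : R) :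
  instance n h ->
  (forall j : nat, (1 <= j <= n)%nat -> h j <= 1/2 ->
     (1 <= k j)%nat /\ / 2 ^ (S (k j)) < h j <= / 2 ^ k j) ->
  is_glb (schedule_height n h) Hstar ->
  pi1 n h + pi3 n h k + pi4 n h k - 1 >= 1 ->
  INR (s2 n h) <= pi1 n h + pi3 n h k + pi4 n h k - 1 ->
  H_PW n h k <= 15/8 * Hstar.
Proof.
  intros Hinst Hk [_ Hglb] HK Hs2.
  assert (Hnonneg : forall j, (1 <= j <= n)%nat -> 0 <= h j)
    by (intros j Hj; left; exact (instance_pos n h Hinst j Hj)).
  pose proof (total_growth_ge_charges n h k Hinst (fun j Hj Hle => proj2 (Hk j Hj Hle))).
  assert (Hza : 8/15 * z_a n h k <= sumL (idx n) h).
  { pose proof (z_a_lt n h k). pose proof (Rfloor_le (sh3 n h k)).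
    pose proof (Rfloor_le (sh4 n h k)). unfold pi3, pi4 in *. lra. }
  assert (Hlower : 8/15 * z_a n h k <= Hstar).
  { apply Hglb. intros x Hx.
    pose proof (schedule_height_ge_total_growth n h x Hnonneg Hx). lra. }
  pose proof (H_PW_le_z_a n h k). lra.
Qed.
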